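(* In Smoluchowski's discrete model (defined in the context), for every $t\ge0$, every $S\subset[N]$ with $\mathbb{P}(S(t)=S)>0$ and every graph $G$ on vertex set $S$, \[ \mathbb{P}(C(t)=G\mid S(t)=S)=\mathbb{P}\big(ER_S(p^{(N)}_t)=G\ \big|\ ER_S(p^{(N)}_t)\text{ has no component of size}\ge\alpha(N)\big), \] i.e. conditionally on $S(t)$, the configuration on $S(t)$ is an Erdős–Rényi graph on $S(t)$ with edge probability $p^{(N)}_t$ conditioned on having no connected component with at least $\alpha(N)$ vertices.
   Context: Smoluchowski's discrete model: $N\ge2$, $(\alpha(N))$ with $\alpha(N)\to\infty$, $\alpha(N)/N\to0$. Particles $[N]$; each unordered pair $\{i,j\}$ has an independent exponential clock $e_{ij}$ of parameter $1/N$; initially no links. When $e_{ij}$ rings, the link is created unless $i$ or $j$ belongs at that moment to a cluster (connected component of created links) of size $\ge\alpha(N)$, in which case it is never created. $S(t)$ is the set of particles in clusters of size $<\alpha(N)$ at time $t$; $C(t)$ is the graph on $S(t)$ with edges $\{i,j\}\subset S(t)$, $e_{ij}\le t$. $p^{(N)}_t=1-e^{-t/N}$. $ER_S(p)$ is the random graph on vertex set $S$ where each edge is present independently with probability $p$. *)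

From HB Require Import structures.
From mathcomp Require Import all_boot all_order all_algebra.
From mathcomp Require Import all_classical all_reals all_analysis.
From mathcomp Require Import exponential_distribution.
Set Implicit Arguments. Unset Strict Implicit. Unset Printing Implicit Defensive.
Import Order.TTheory GRing.Theory Num.Theory.
Local Open Scope ring_scope.

Section Smoluchowski.
Variable R : realType.
Variable N : nat.

(* A graph on (a subset of) [N] is given by its edge set: a set of 2-subsets. *)
Definition adj (G : {set {set 'I_N}}) : rel 'I_N := fun x y => [set x; y] \in G.
Definition cluster (G : {set {set 'I_N}}) (x : 'I_N) : {set 'I_N} :=
  [set y | connect (adj G) x y].

Definition graph_on (S : {set 'I_N}) (G : {set {set 'I_N}}) : bool :=
  [forall E in G, (#|E| == 2) && (E \subset S)].

Definition no_big_comp (a : R) (S : {set 'I_N}) (G : {set {set 'I_N}}) : bool :=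
  [forall x in S, #|cluster G x|%:R < a].

(* unordered pairs {i,j}, encoded as (i,j) with i < j *)
Definition pairs : seq ('I_N * 'I_N) :=
  [seq p <- [seq (i, j) | i <- enum 'I_N, j <- enum 'I_N] | (val p.1 < val p.2)%N].

Definition clocks := 'I_N * 'I_N -> R.

(* Deterministic evolution: the clocks that ring in [0,t], in increasing
   order of ringing time (ties have probability 0; they are broken by sort). *)
Definition rung (e : clocks) (t : R) : seq ('I_N * 'I_N) :=
  sort (fun p q => e p <= e q) [seq p <- pairs | e p <= t].

Definition step (a : R) (G : {set {set 'I_N}}) (p : 'I_N * 'I_N) :=
  if (#|cluster G p.1|%:R < a) && (#|cluster G p.2|%:R < a)
  then [set p.1; p.2] |: G else G.

Definition links (a : R) (e : clocks) (t : R) : {set {set 'I_N}} :=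
  foldl (step a) finset.set0 (rung e t).

Definition St (a : R) (e : clocks) (t : R) : {set 'I_N} :=
  [set x | #|cluster (links a e t) x|%:R < a].

Definition Ct (a : R) (e : clocks) (t : R) : {set {set 'I_N}} :=
  [set E : {set 'I_N} | [exists i : 'I_N, exists j : 'I_N,
     [&& (i < j)%N, E == [set i; j], i \in St a e t, j \in St a e t & e (i, j) <= t]]].

Definition upd (x : clocks) (p : 'I_N * 'I_N) (y : R) : clocks :=
  fun q => if q == p then y else x q.

(* iterated integral over the independent clocks, each exponential with
   the given rate (density w.r.t. Lebesgue measure) *)
Fixpoint iint (rate : R) (l : seq ('I_N * 'I_N)) (f : clocks -> \bar R)
  (x : clocks) : \bar R :=
  match l with
  | [::] => f x
  | p :: l' => (\int[lebesgue_measure]_y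
                 ((exponential_pdf rate y)%:E * iint rate l' f (upd x p y)))%E
  end.

Definition Pr (E : clocks -> bool) : \bar R :=
  iint (N%:R^-1) pairs (fun e => (E e)%:R%:E) (fun _ => 0).

Definition ER (S : {set 'I_N}) (p : R) (A : {set {set 'I_N}} -> bool) : R :=
  \sum_(H : {set {set 'I_N}} | graph_on S H && A H)
     p ^+ #|H| * (1 - p) ^+ ('C(#|S|, 2) - #|H|).

End Smoluchowski.

Definition pN {R : realType} (N : nat) (t : R) : R := 1 - expR (- (t / N%:R)).

(* Conditionally on S(t) = S, no link joins S to its complement, and the
   process decouples.  Inside S every clock that rang before t created its
   link, because all clusters there stay below alpha; so C(t) is the graph of
   the pairs of S whose clock rang before t.  Outside S the process coincides
   with the one in which all clocks of pairs inside S are muted.  Hence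
   {S(t) = S, C(t) = G} is the intersection of {the rung graph on S is G and
   has no component of size >= alpha} with {S(t) = S for the muted process},
   and the two events depend on disjoint families of independent clocks.
   Each clock inside S rings before t with probability p_t, which produces
   the Erdos-Renyi weights, and the second factor cancels in the conditional
   probability. *)

From Pilot Require Import Defs.
From HB Require Import structures.
From mathcomp Require Import all_boot all_order all_algebra.
From mathcomp Require Import all_classical all_reals all_analysis.
From mathcomp Require Import exponential_distribution measurable_realfun zify ring.
Import Order.TTheory GRing.Theory Num.Theory.
Import numFieldNormedType.Exports.
Set Implicit Arguments. Unset Strict Implicit. Unset Printing Implicit Defensive.
Local Open Scope classical_set_scope.
Local Open Scope ring_scope.

Section ge0_integral_nomeas.
Local Open Scope ereal_scope.
Context d (T : measurableType d) (R : realType) (mu : {measure set T -> \bar R}).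
Import HBNNSimple.

(* Unlike [ge0_le_integral] and [ge0_integralZl], no measurability is assumed:
   the integrands produced by [iint] are not known to be measurable. *)
Lemma ge0_le_integral_nomeas (f g : T -> \bar R) :
  (forall x, 0 <= f x) -> (forall x, f x <= g x) ->
  \int[mu]_x f x <= \int[mu]_x g x.
Proof.
move=> f0 fg; have g0 x : 0 <= g x by exact: le_trans (f0 x) (fg x).
rewrite ge0_integralTE // ge0_integralTE //; apply: ereal_sup_le.
by move=> z /= [h hf <-]; exists h => // x; exact: le_trans (hf x) (fg x).
Qed.

Lemma ge0_integralZl_nomeas (f : T -> \bar R) (k : R) :
  (0 <= k)%R -> (forall x, 0 <= f x) ->
  \int[mu]_x (k%:E * f x) = k%:E * \int[mu]_x f x.
Proof.
move=> k0 f0; have [->|k_neq0] := eqVneq k 0%R.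
  by rewrite mul0e; under eq_integral do rewrite mul0e; rewrite integral0.
have k_gt0 : (0 < k)%R by rewrite lt_def k_neq0.
rewrite ge0_integralTE; last by move=> x; rewrite mule_ge0.
rewrite ge0_integralTE // -ereal_supZl //; last first.
  by apply/set0P; exists 0; exists nnsfun0 => //=; exact: sintegral0.
congr ereal_sup; apply/seteqP; split => z /=.
- move=> [h hle <-]; have kV0 : (0 <= k^-1)%R by rewrite invr_ge0.
  exists (sintegral mu (scale_nnsfun h kV0)).
    exists (scale_nnsfun h kV0) => //= x.
    rewrite EFinM -(@lee_pmul2l _ k%:E) ?lte_fin // muleA -EFinM.
    by rewrite mulrV ?unitfE // mul1r.
  rewrite -(sintegralrM mu k (scale_nnsfun h kV0)); apply: eq_sintegral => x /=.
  by rewrite mulrA mulrV ?unitfE // mul1r.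
- move=> [_ [h hle <-] <-]; exists (scale_nnsfun h k0) => /=.
    by move=> x; rewrite EFinM; exact: lee_wpmul2l.
  by rewrite -sintegralrM.
Qed.

End ge0_integral_nomeas.

Definition exponential_cdf (R : realType) (rate t : R) : R := 1 - expR (- (t * rate)).

Section exponential_clock.
Context (R : realType) (rate : R).
Hypothesis rate_gt0 : 0 < rate.
Local Notation mu := (@lebesgue_measure R).
Local Notation pdf := (exponential_pdf rate).

Let pdf_ge0 x : (0 <= (pdf x)%:E)%E.
Proof. by rewrite lee_fin exponential_pdf_ge0 // ltW. Qed.

Let measurable_pdf (D : set R) : measurable_fun D (fun x : R => ((pdf x)%:E : \bar R)).
Proof.
apply: measurable_funS (@subsetT _ D) _ => //.
by apply/measurable_EFinP; exact: measurable_exponential_pdf.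
Qed.

Lemma exponential_cdf_ge0 t : 0 <= t -> 0 <= exponential_cdf rate t.
Proof. by move=> t0; rewrite subr_ge0 expR_le1 oppr_le0 mulr_ge0 // ltW. Qed.

Lemma exponential_cdf_le1 t : exponential_cdf rate t <= 1.
Proof. by rewrite lerBlDr lerDl expR_ge0. Qed.

Lemma integral_exponential_pdf_le t : 0 <= t ->
  (\int[mu]_(x in `]-oo, t]) (pdf x)%:E = (exponential_cdf rate t)%:E)%E.
Proof.
move=> t0.
have -> : `]-oo, t]%classic = `]-oo, 0[%classic `|` `[0, t]%classic :> set R.
  apply/seteqP; split => x /=; rewrite !in_itv /=.
    by move=> xt; case: (ltP x 0) => x0; [left|right]; rewrite ?x0 ?xt.
  by case=> [/ltW x0|/andP[_ ->]] //; exact: le_trans t0.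
rewrite ge0_integral_setU //=; last 2 first.
- exact: measurable_pdf.
- apply/disj_setPS => x [] /=; rewrite !in_itv /= => x0 /andP[x0' _].
  by move: (lt_le_trans x0 x0'); rewrite ltxx.
rewrite integral0_eq ?add0e; last first.
  by move=> x /=; rewrite in_itv /= => x0; rewrite lt0_exponential_pdf.
have [->|t_neq0] := eqVneq t 0.
  rewrite /exponential_cdf mul0r oppr0 expR0 subrr (integral_Sset1 0%R) //.
  by move=> x /=; rewrite in_itv /= => /andP[x0 x0']; apply/eqP; rewrite eq_le x0 x0'.
have t_gt0 : 0 < t by rewrite lt_def t_neq0.
have := exponential_prob_itv0c rate t_gt0.
by rewrite /exponential_prob => ->; rewrite /exponential_cdf mulNr mulrC EFinB.
Qed.

Lemma integral_exponential_pdf_gt t : 0 <= t ->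
  (\int[mu]_(x in ~` `]-oo, t]) (pdf x)%:E = (1 - exponential_cdf rate t)%:E)%E.
Proof.
move=> t0; have := integral_exponential_pdf rate_gt0.
rewrite -(setUv `]-oo, t]%classic) ge0_integral_setU //=; last 3 first.
- exact: measurableC.
- exact: measurable_pdf.
- exact/disj_setPCl.
rewrite integral_exponential_pdf_le // => total.
have : (\int[mu]_(x in ~` `]-oo, t]) (pdf x)%:E)%E \is a fin_num.
  rewrite ge0_fin_numE; last exact: integral_ge0.
  apply: le_lt_trans (ltry 1%R); rewrite -total leeDr // lee_fin.
  exact: exponential_cdf_ge0.
move=> /fineK fin; rewrite -fin in total *; congr EFin.
by move: total; rewrite -EFinD => -[<-]; rewrite addrC addKr.
Qed.

Lemma integral_exponential_pdf_threshold t (W1 W0 : R) :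
  0 <= t -> 0 <= W1 -> 0 <= W0 ->
  (\int[mu]_y ((pdf y)%:E * (if y <= t then W1 else W0)%:E) =
   (exponential_cdf rate t * W1 + (1 - exponential_cdf rate t) * W0)%:E)%E.
Proof.
move=> t0 W10 W00.
have mf : measurable_fun setT
    (fun y => ((pdf y)%:E * (if y <= t then W1 else W0)%:E)%E).
  apply/measurable_EFinP => /=; apply: measurable_funM.
    exact: measurable_exponential_pdf.
  by apply: measurable_fun_ifT => //; exact: measurable_fun_ler.
rewrite -(setUv `]-oo, t]%classic) ge0_integral_setU //=; last 4 first.
- exact: measurableC.
- by rewrite setUv.
- by move=> x _; apply: mule_ge0 => //; case: ifP.
- exact/disj_setPCl.
transitivity (\int[mu]_(x in `]-oo, t]) (W1%:E * (pdf x)%:E) +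
              \int[mu]_(x in ~` `]-oo, t]) (W0%:E * (pdf x)%:E))%E.
  congr (_ + _)%E; apply: eq_integral => x; rewrite inE /= in_itv /=.
    by move=> ->; rewrite muleC.
  by move=> /negP/negbTE ->; rewrite muleC.
rewrite !ge0_integralZl_EFin //; try exact: measurableC; try exact: measurable_pdf.
rewrite integral_exponential_pdf_le // integral_exponential_pdf_gt //.
by rewrite -!EFinM -EFinD mulrC [X in _ + X]mulrC.
Qed.

Lemma integral_exponential_pdfZr (C : \bar R) : (0 <= C)%E ->
  (\int[mu]_y ((pdf y)%:E * C) = C)%E.
Proof.
move=> C0; under eq_integral do rewrite muleC.
rewrite ge0_integralZl //; last exact: measurable_pdf.
by rewrite integral_exponential_pdf // mule1.
Qed.

End exponential_clock.

(* Undo the shadowing of seq/finset names by classical_sets and of [cluster]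
   by the topology library. *)
Import mathcomp.boot.seq mathcomp.boot.fintype mathcomp.boot.finset Pilot.Defs.

Section function_update.
Context (A : eqType) (B : Type).
Implicit Types (f : A -> B) (a : A) (b : B).

Definition fupd f a b : A -> B := fun x => if x == a then b else f x.

Lemma fupd_neq f a b x : x != a -> fupd f a b x = f x.
Proof. by rewrite /fupd => /negbTE ->. Qed.

Lemma fupdK f a b b' : fupd (fupd f a b) a b' = fupd f a b'.
Proof. by apply/funext => x; rewrite /fupd; case: (x == a). Qed.

Lemma fupdC f a a' b b' : a' != a ->
  fupd (fupd f a b) a' b' = fupd (fupd f a' b') a b.
Proof.
move=> a'a; apply/funext => x; rewrite /fupd.
by have [->|//] := eqVneq x a'; rewrite (negbTE a'a).
Qed.

End function_update.

Lemma sum_subsetU1 (T : finType) (V : nmodType) (a : T) (U : {set T})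
    (F : {set T} -> V) : a \notin U ->
  \sum_(H : {set T} | H \subset a |: U) F H =
  \sum_(H : {set T} | H \subset U) F (a |: H) + \sum_(H : {set T} | H \subset U) F H.
Proof.
move=> aU; have aH (H : {set T}) : H \subset U -> a \notin H.
  by move=> HU; apply: contraNN aU => /(subsetP HU).
rewrite (bigID (fun H : {set T} => a \in H)) /=; congr (_ + _).
  rewrite (reindex_onto (fun H => a |: H) (fun H => H :\ a)) /=; last first.
    by move=> H /andP[_ Ha]; rewrite setD1K.
  apply: eq_bigl => H; rewrite setU11 andbT; apply/andP/idP => [[sH /eqP <-]|HU].
    by rewrite subDset.
  by split; [rewrite setUS | rewrite setU1K ?aH].
apply: eq_bigl => H; apply/andP/idP => [[sH Ha]|HU].
  apply/subsetP => y yH; move: (subsetP sH y yH); rewrite in_setU1.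
  by case: eqP => // ya; rewrite -ya yH in Ha.
by split; [exact: subset_trans HU (subsetU1 a U) | exact: aH].
Qed.

Section bernoulli_expectation.
Context (R : realType) (T : finType) (q : R).
Implicit Types (l : seq T) (Phi : (T -> bool) -> bool) (th : T -> bool).

(* The expectation of [Phi] when the coordinates listed in [l] are resampled
   as independent Bernoulli(q) variables and the others are read off [th]. *)
Fixpoint bern_expect l Phi th : R :=
  if l is x :: l' then
    q * bern_expect l' Phi (fupd th x true) +
    (1 - q) * bern_expect l' Phi (fupd th x false)
  else (Phi th)%:R.

Lemma bern_expect_ge0 l Phi th : 0 <= q <= 1 -> 0 <= bern_expect l Phi th.
Proof.
move=> /andP[q0 q1]; elim: l th => [|x l IH] th /=; first by case: (Phi th).
by rewrite addr_ge0 // mulr_ge0 // subr_ge0.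
Qed.

Lemma bern_expect_fupd l Phi th x b :
  (forall th' b', Phi (fupd th' x b') = Phi th') ->
  bern_expect l Phi (fupd th x b) = bern_expect l Phi th.
Proof.
move=> Phi_x; elim: l th => [|y l IH] th /=; first by rewrite Phi_x.
have [->|yx] := eqVneq y x; first by rewrite !fupdK.
by rewrite !(fupdC _ _ _ yx) !IH.
Qed.

Lemma bern_expect_filter (I : pred T) l Phi th :
  (forall th' x b, ~~ I x -> Phi (fupd th' x b) = Phi th') ->
  bern_expect l Phi th = bern_expect (filter I l) Phi th.
Proof.
move=> Phi_I; elim: l th => [|x l IH] th //=.
case: ifP => Ix /=; first by rewrite !IH.
have Phi_x th' b' : Phi (fupd th' x b') = Phi th' by rewrite Phi_I ?Ix.
by rewrite !bern_expect_fupd // -mulrDl subrKC mul1r IH.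
Qed.

Lemma bern_expect_sum l Phi th : uniq l ->
  bern_expect l Phi th =
  \sum_(H : {set T} | H \subset [set x in l])
     q ^+ #|H| * (1 - q) ^+ (size l - #|H|) *
     (Phi (fun x => if x \in l then x \in H else th x))%:R.
Proof.
elim: l th => [|x l IH] th /=.
  move=> _; rewrite (big_pred1 set0); last by move=> H; rewrite set_nil subset0.
  by rewrite cards0 !expr0 !mul1r.
move=> /andP[xl ul]; rewrite !IH // set_cons sum_subsetU1 ?inE //.
rewrite !mulr_sumr; congr (_ + _); apply: eq_bigr => H HU;
  have xH : x \notin H by apply: contraNN xl => /(subsetP HU); rewrite inE.
- have -> : (fun y => if y \in x :: l then y \in x |: H else th y) =
            (fun y => if y \in l then y \in H else fupd th x true y).
    apply/funext => y; rewrite /fupd !inE.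
    by have [->|//] := eqVneq y x; rewrite (negbTE xl).
  by rewrite cardsU1 xH add1n subSS exprS; ring.
- have -> : (fun y => if y \in x :: l then y \in H else th y) =
            (fun y => if y \in l then y \in H else fupd th x false y).
    apply/funext => y; rewrite /fupd !inE.
    by have [->|//] := eqVneq y x; rewrite (negbTE xl) (negbTE xH).
  have Hl : (#|H| <= size l)%N.
    by rewrite (leq_trans (subset_leq_card HU)) // cardsE card_size.
  by rewrite subSn // exprS; ring.
Qed.

End bernoulli_expectation.

Definition fired (R : realType) (N : nat) (t : R) (e : clocks R N) :
  'I_N * 'I_N -> bool := fun p => e p <= t.

Section iterated_integral.
Context (R : realType) (N : nat) (rate : R).
Hypothesis rate_gt0 : 0 < rate.
Local Notation pair := ('I_N * 'I_N)%type.
Local Notation mu := (@lebesgue_measure R).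
Local Notation pdf := (exponential_pdf rate).
Implicit Types (l : seq pair) (F : clocks R N -> \bar R) (x e : clocks R N).

Let pdf_ge0 y : (0 <= (pdf y)%:E)%E.
Proof. by rewrite lee_fin exponential_pdf_ge0 // ltW. Qed.

Lemma fired_upd t x p y : fired t (upd x p y) = fupd (fired t x) p (y <= t).
Proof. by apply/funext => r; rewrite /fired /upd /fupd; case: (r == p). Qed.

Lemma iint_upd l F x p y : (forall e z, F (upd e p z) = F e) ->
  iint rate l F (upd x p y) = iint rate l F x.
Proof.
move=> F_p; elim: l x => [|r l IH] x /=; first exact: F_p.
congr (integral _ _ _); apply/funext => z.
have [->|rp] := eqVneq r p; first by rewrite [upd _ p z]fupdK.
by rewrite [upd (upd _ _ _) _ _](fupdC _ _ _ rp) IH.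
Qed.

Lemma iint_ge0 l F x : (forall e, 0 <= F e)%E -> (0 <= iint rate l F x)%E.
Proof.
move=> F0; elim: l x => [|r l IH] x /=; first exact: F0.
by apply: integral_ge0 => y _; apply: mule_ge0.
Qed.

Lemma iint_le1 l F x : (forall e, 0 <= F e <= 1)%E -> (iint rate l F x <= 1)%E.
Proof.
move=> F01; elim: l x => [|r l IH] x /=; first by case/andP: (F01 x).
rewrite -(integral_exponential_pdf rate_gt0); apply: ge0_le_integral_nomeas => y.
  by apply: mule_ge0 => //; apply: iint_ge0 => e; case/andP: (F01 e).
by rewrite -[leRHS]mule1; apply: lee_wpmul2l.
Qed.

Lemma iint_fin_num l F x : (forall e, 0 <= F e <= 1)%E -> iint rate l F x \is a fin_num.
Proof.
move=> F01; rewrite ge0_fin_numE; last by apply: iint_ge0 => e; case/andP: (F01 e).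
exact: le_lt_trans (iint_le1 _ _ F01) (ltry 1).
Qed.

Variables (t : R) (I : pred pair) (Phi : (pair -> bool) -> bool) (B : clocks R N -> bool).
Hypothesis t_ge0 : 0 <= t.
Hypothesis Phi_inside : forall th p b, ~~ I p -> Phi (fupd th p b) = Phi th.
Hypothesis B_outside : forall e p y, I p -> B (upd e p y) = B e.
Local Notation q := (exponential_cdf rate t).

(* Independence: [Phi] only reads the clocks in [I] and [B] only the others. *)
Lemma iint_factor l x :
  iint rate l (fun e => (Phi (fired t e) && B e)%:R%:E) x =
  ((bern_expect q l Phi (fired t x))%:E * iint rate l (fun e => (B e)%:R%:E) x)%E.
Proof.
have B01 e : (0 <= ((B e)%:R : R)%:E <= 1)%E.
  by case: (B e); rewrite !lee_fin /= ?ler01 ?lexx.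
have W_ge0 l' th : 0 <= bern_expect q l' Phi th.
  by rewrite bern_expect_ge0 // exponential_cdf_ge0 // exponential_cdf_le1.
elim: l x => [|p l IH] x /=.
  by rewrite -EFinM; case: (Phi _); case: (B x); rewrite /= ?mul1r ?mul0r.
under eq_integral do rewrite IH fired_upd.
set W1 := bern_expect q l Phi (fupd (fired t x) p true).
set W0 := bern_expect q l Phi (fupd (fired t x) p false).
have [Ip|NIp] := boolP (I p).
- set C := iint rate l (fun e => (B e)%:R%:E) x.
  have C_upd y : iint rate l (fun e => (B e)%:R%:E) (upd x p y) = C.
    by apply: iint_upd => e z; rewrite (B_outside _ _ Ip).
  have C_int : (\int[mu]_y ((pdf y)%:E *
                  iint rate l (fun e => (B e)%:R%:E) (upd x p y)) = C)%E.
    under eq_integral do rewrite C_upd.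
    by rewrite integral_exponential_pdfZr // iint_ge0.
  have CE : C = (fine C)%:E by rewrite fineK // iint_fin_num.
  rewrite C_int.
  have W_if (y : R) : bern_expect q l Phi (fupd (fired t x) p (y <= t)) =
                      if y <= t then W1 else W0 by case: (y <= t).
  transitivity
    (\int[mu]_y ((fine C)%:E * ((pdf y)%:E * (if y <= t then W1 else W0)%:E)))%E.
    by apply: eq_integral => y _; rewrite W_if C_upd -CE [RHS]muleC -muleA.
  rewrite ge0_integralZl_nomeas ?fine_ge0 ?iint_ge0 //; last first.
    by move=> y; apply: mule_ge0 => //; case: ifP; rewrite lee_fin W_ge0.
  by rewrite integral_exponential_pdf_threshold ?W_ge0 // -CE muleC.
- have W_upd b :
      bern_expect q l Phi (fupd (fired t x) p b) = bern_expect q l Phi (fired t x).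
    by apply: bern_expect_fupd => th b'; rewrite Phi_inside.
  under eq_integral do rewrite W_upd muleCA.
  rewrite ge0_integralZl_nomeas //; last first.
    by move=> y; apply: mule_ge0 => //; exact: iint_ge0.
  by rewrite /W1 /W0 !W_upd -mulrDl subrKC mul1r.
Qed.

End iterated_integral.

Section pattern_graph.
Context (N : nat).
Local Notation pair := ('I_N * 'I_N)%type.
Local Notation graph := {set {set 'I_N}}.
Implicit Types (S : {set 'I_N}) (th : pair -> bool) (p r : pair).

Definition edge p : {set 'I_N} := [set p.1; p.2].

Definition internal S p := (p.1 \in S) && (p.2 \in S).

Definition pattern_graph S th : graph :=
  [set E : {set 'I_N} | [exists i : 'I_N, exists j : 'I_N,
     [&& (i < j)%N, E == [set i; j], i \in S, j \in S & th (i, j)]]].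

Definition internal_pairs S : seq pair := filter (internal S) (pairs N).

Lemma mem_pairs p : (p \in pairs N) = (p.1 < p.2)%N.
Proof.
rewrite mem_filter; case: ltnP => //= _; case: p => a b.
by apply: allpairs_f; rewrite mem_enum.
Qed.

Lemma uniq_pairs : uniq (pairs N).
Proof. by apply/filter_uniq/allpairs_uniq; rewrite ?enum_uniq // => -[? ?] [? ?]. Qed.

Lemma uniq_internal_pairs S : uniq (internal_pairs S).
Proof. exact: filter_uniq uniq_pairs. Qed.

Lemma mem_internal_pairs S p :
  (p \in internal_pairs S) = (p.1 < p.2)%N && internal S p.
Proof. by rewrite mem_filter mem_pairs andbC. Qed.

Lemma edge_inj p r : (p.1 < p.2)%N -> (r.1 < r.2)%N -> edge p = edge r -> p = r.
Proof.
case: p r => [a b] [c d] /= ab cd E.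
have : c \in [set a; b] by rewrite /edge /= in E; rewrite E !inE eqxx.
have : d \in [set a; b] by rewrite /edge /= in E; rewrite E !inE eqxx orbT.
have : a \in [set c; d] by rewrite /edge /= in E; rewrite -E !inE eqxx.
rewrite !inE => /orP[/eqP ac|/eqP ad] /orP[/eqP da|/eqP db] /orP[/eqP ca|/eqP cb];
  subst; try by []; lia.
Qed.

Lemma pattern_graphP S th E :
  reflect (exists p, [/\ (p.1 < p.2)%N, internal S p, th p & E = edge p])
          (E \in pattern_graph S th).
Proof.
apply: (iffP idP).
  rewrite inE => /existsP[i /existsP[j /and5P[ij /eqP-> iS jS thij]]].
  by exists (i, j); split => //; rewrite /internal /= iS jS.
case=> [[i j] [/= ij /andP[/= iS jS] thij ->]]; rewrite inE.
by apply/existsP; exists i; apply/existsP; exists j; rewrite ij eqxx iS jS thij.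
Qed.

Lemma pattern_graph_fupd S th p b : ~~ internal S p ->
  pattern_graph S (fupd th p b) = pattern_graph S th.
Proof.
move=> Np; apply/setP => E; apply/pattern_graphP/pattern_graphP;
  case=> r [r12 Ir thr ->]; exists r; split => //;
  have rp : r != p by apply: contraNneq Np => <-.
  by rewrite fupd_neq in thr.
by rewrite fupd_neq.
Qed.

Lemma pattern_graph_restrict S th (H : {set pair}) :
  H \subset [set p in internal_pairs S] ->
  pattern_graph S (fun p => if p \in internal_pairs S then p \in H else th p) = edge @: H.
Proof.
move=> /subsetP HL; apply/setP => E; apply/pattern_graphP/imsetP.
  case=> p [p12 Ip]; rewrite mem_internal_pairs p12 Ip => pH ->.
  by exists p.
case=> p pH ->; have := HL p pH; rewrite inE mem_internal_pairs => /andP[p12 Ip].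
by exists p; rewrite mem_internal_pairs p12 Ip.
Qed.

Lemma edge_graph_on S p :
  p \in internal_pairs S -> (#|edge p| == 2) && (edge p \subset S).
Proof.
rewrite mem_internal_pairs => /andP[p12 /andP[p1S p2S]].
have p1p2 : p.1 != p.2 by apply/eqP => e; move: p12; rewrite e ltnn.
by rewrite cards2 p1p2; apply/subsetP => x; rewrite !inE => /orP[] /eqP->.
Qed.

Lemma graph_on_edge S (E : {set 'I_N}) : #|E| == 2 -> E \subset S ->
  exists2 p, p \in internal_pairs S & E = edge p.
Proof.
move=> /cards2P[x [y [xy ->]]] /subsetP ES.
have xS : x \in S by apply: ES; rewrite !inE eqxx.
have yS : y \in S by apply: ES; rewrite !inE eqxx orbT.
case: (ltngtP x y) => [lxy|lyx|exy].
- by exists (x, y); rewrite // mem_internal_pairs /internal /= lxy xS yS.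
- exists (y, x); first by rewrite mem_internal_pairs /internal /= lyx xS yS.
  by rewrite /edge /= setUC.
- by move: xy; rewrite (val_inj exy) eqxx.
Qed.

Lemma edge_in_inj S : {in [set p in internal_pairs S] &, injective edge}.
Proof.
move=> p r; rewrite !inE !mem_internal_pairs => /andP[p12 _] /andP[r12 _].
exact: edge_inj.
Qed.

Lemma sum_graph_on (V : nmodType) S (F : graph -> V) :
  \sum_(G | graph_on S G) F G =
  \sum_(H : {set pair} | H \subset [set p in internal_pairs S]) F (edge @: H).
Proof.
set L := [set p in internal_pairs S].
rewrite (reindex_onto (fun H : {set pair} => edge @: H)
                      (fun G => [set p in L | edge p \in G])) /=.
  apply: eq_bigl => H; apply/andP/idP => [[_ /eqP <-]|HL].
    by apply/subsetP => p; rewrite inE => /andP[].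
  split.
    apply/forall_inP => E /imsetP[p pH ->]; apply: edge_graph_on.
    by have := subsetP HL p pH; rewrite inE.
  apply/eqP/setP => p; rewrite inE; apply/andP/idP => [[pL /imsetP[r rH er]]|pH].
    by rewrite (edge_in_inj pL (subsetP HL r rH) er).
  by split; [exact: subsetP HL p pH | apply: imset_f].
move=> G /forall_inP GS; apply/setP => E; apply/imsetP/idP => [[p]|EG].
  by rewrite inE => /andP[_ ?] ->.
have /andP[E2 ES] := GS E EG; have [p pL Ep] := graph_on_edge E2 ES.
by exists p; rewrite // inE -Ep EG andbT inE.
Qed.

Lemma size_internal_pairs S : size (internal_pairs S) = 'C(#|S|, 2).
Proof.
have /card_uniqP <- := uniq_internal_pairs S.
rewrite -[#|internal_pairs S|]cardsE -(card_in_imset (@edge_in_inj S)) -cards_draws.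
apply: eq_card => E; rewrite inE; apply/imsetP/idP => [[p pL ->]|/andP[ES E2]].
  by rewrite inE in pL; rewrite andbC edge_graph_on.
by have [p pL ->] := graph_on_edge E2 ES; exists p; rewrite ?inE.
Qed.

End pattern_graph.

Lemma ER_bern_expect (R : realType) (N : nat) (q : R) (S : {set 'I_N})
    (A : {set {set 'I_N}} -> bool) (th : 'I_N * 'I_N -> bool) :
  ER S q A = bern_expect q (pairs N) (fun th => A (pattern_graph S th)) th.
Proof.
rewrite (@bern_expect_filter _ _ q (internal S)); last first.
  by move=> th' p b Np; rewrite pattern_graph_fupd.
rewrite bern_expect_sum -/(internal_pairs S); last exact: uniq_internal_pairs.
rewrite size_internal_pairs /ER big_mkcondr sum_graph_on /=.
apply: eq_bigr => H HL; rewrite pattern_graph_restrict // card_in_imset.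
  by case: (A _); rewrite ?mulr1 ?mulr0.
by move=> p r pH rH; apply: edge_in_inj; exact: (subsetP HL).
Qed.

Lemma connect_sub_in (T : finType) (e e' : rel T) (P : pred T) :
  (forall u v, P u -> e u v -> e' u v && P v) ->
  forall x y, P x -> connect e x y -> connect e' x y && P y.
Proof.
move=> ee' x y Px /connectP[s]; elim: s x Px => [|z s IH] x Px /=.
  by move=> _ ->; rewrite connect0.
case/andP => exz pzs ylast; have /andP[e'xz Pz] := ee' x z Px exz.
have /andP[czy ->] := IH z Pz pzs ylast.
by rewrite (connect_trans (connect1 e'xz) czy).
Qed.

Section clusters.
Context (N : nat) (S : {set 'I_N}).
Local Notation graph := {set {set 'I_N}}.
Implicit Types (G L Q : graph) (x y : 'I_N).

Definition edges_inside G := [forall E in G, E \subset S].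
Definition edges_outside G := [forall E in G, E \subset ~: S].
Definition crossing G :=
  [exists i : 'I_N, exists j : 'I_N, [&& i \in S, j \notin S & [set i; j] \in G]].

Lemma edges_inside0 : edges_inside set0.
Proof. by apply/forall_inP => E; rewrite in_set0. Qed.

Lemma edges_outside0 : edges_outside set0.
Proof. by apply/forall_inP => E; rewrite in_set0. Qed.

Lemma adj_sym G : symmetric (adj G).
Proof. by move=> x y; rewrite /adj setUC. Qed.

Lemma mem_cluster G x : x \in cluster G x.
Proof. by rewrite inE connect0. Qed.

Lemma subset_cluster G G' x : G \subset G' -> cluster G x \subset cluster G' x.
Proof.
move=> GG'; apply/subsetP => y; rewrite !inE; apply: connect_sub => u v uv.
by apply: connect1; rewrite /adj (subsetP GG').
Qed.

Lemma cluster_eq G x y : y \in cluster G x -> cluster G y = cluster G x.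
Proof.
rewrite inE => cxy; have cyx : connect (adj G) y x.
  by rewrite (sym_connect_sym (@adj_sym G)).
apply/setP => z; rewrite !inE.
by apply/idP/idP => h; [exact: connect_trans cxy h | exact: connect_trans cyx h].
Qed.

Lemma cluster_setU_inside L Q x : edges_outside L -> edges_inside Q -> x \in S ->
  cluster (L :|: Q) x = cluster Q x.
Proof.
move=> /forall_inP LS /forall_inP QS xS; apply/eqP.
rewrite eqEsubset; apply/andP; split; last by apply: subset_cluster; rewrite subsetUr.
apply/subsetP => y; rewrite !inE.
suff adjQ u v : u \in S -> adj (L :|: Q) u v -> adj Q u v && (v \in S).
  by move=> /(@connect_sub_in _ _ _ (mem S) adjQ x y xS) /andP[].
move=> uS; rewrite /adj in_setU => /orP[uvL|uvQ].
  by have := subsetP (LS _ uvL) u; rewrite !inE eqxx uS => /(_ isT).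
by rewrite uvQ; apply: (subsetP (QS _ uvQ)); rewrite !inE eqxx orbT.
Qed.

Lemma cluster_setU_outside L Q x : edges_outside L -> edges_inside Q -> x \notin S ->
  cluster (L :|: Q) x = cluster L x.
Proof.
move=> /forall_inP LS /forall_inP QS xS; apply/eqP.
rewrite eqEsubset; apply/andP; split; last by apply: subset_cluster; rewrite subsetUl.
apply/subsetP => y; rewrite !inE.
suff adjL u v : u \notin S -> adj (L :|: Q) u v -> adj L u v && (v \notin S).
  by move=> /(@connect_sub_in _ _ _ [pred u | u \notin S] adjL x y xS) /andP[].
move=> uS; rewrite /adj in_setU => /orP[uvL|uvQ].
  by rewrite uvL; have := subsetP (LS _ uvL) v; rewrite !inE eqxx orbT => /(_ isT).
by have := subsetP (QS _ uvQ) u; rewrite !inE eqxx => /(_ isT) uS'; rewrite uS' in uS.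
Qed.

Lemma cluster_outside_edges L x : edges_outside L -> x \in S -> cluster L x = [set x].
Proof.
move=> LS xS; rewrite -[L]setU0 cluster_setU_inside ?edges_inside0 //.
apply/setP => y; rewrite !inE.
apply/idP/eqP => [|->]; last exact: connect0.
suff adj0 u v : u == x -> adj set0 u v -> adj set0 u v && (v == x).
  by move=> /(@connect_sub_in _ _ _ (pred1 x) adj0 x y (eqxx x)) /andP[_ /eqP].
by rewrite /adj in_set0.
Qed.

Lemma crossingS G G' : G \subset G' -> crossing G -> crossing G'.
Proof.
move=> GG' /existsP[i /existsP[j /and3P[iS jS ij]]].
by apply/existsP; exists i; apply/existsP; exists j; rewrite iS jS (subsetP GG').
Qed.

Lemma crossing_edge G i j : i \in S -> j \notin S -> crossing ([set i; j] |: G).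
Proof.
move=> iS jS; apply/existsP; exists i; apply/existsP; exists j.
by rewrite iS jS setU11.
Qed.

End clusters.

Section evolution.
Context (R : realType) (N : nat) (a : R) (S : {set 'I_N}).
Local Notation pair := ('I_N * 'I_N)%type.
Local Notation graph := {set {set 'I_N}}.
Local Notation evolve := (foldl (step a)).
Local Notation small G x := (#|cluster G x|%:R < a).
Implicit Types (G L Q K : graph) (r : seq pair) (p : pair).

Lemma small_subset G G' x : G \subset G' -> small G' x -> small G x.
Proof.
by move=> GG'; apply: le_lt_trans; rewrite ler_nat subset_leq_card ?subset_cluster.
Qed.

Lemma subset_step G p : G \subset step a G p.
Proof. by rewrite /step; case: ifP => _; [exact: subsetUr | exact: subxx]. Qed.

Lemma subset_evolve r G : G \subset evolve G r.
Proof.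
elim: r G => [|p r IH] G /=; first exact: subxx.
exact: subset_trans (subset_step G p) (IH _).
Qed.

Lemma mem_evolve r G p : p \in r ->
  small (evolve G r) p.1 -> small (evolve G r) p.2 -> edge p \in evolve G r.
Proof.
elim: r G => [|s r IH] G //=; rewrite inE.
move=> /orP[/eqP->|pr] small1 small2; last exact: IH.
have sub : G \subset evolve (step a G s) r.
  exact: subset_trans (subset_step G s) (subset_evolve _ _).
apply: (subsetP (subset_evolve r (step a G s))).
by rewrite /step (small_subset sub small1) (small_subset sub small2) setU11.
Qed.

Variable K : graph.
Hypothesis K_small : forall x, x \in S -> small K x.

Lemma one_lt_threshold x : x \in S -> 1 < a.
Proof.
move=> xS; apply: le_lt_trans (K_small xS); rewrite ler1n card_gt0.
by apply/set0Pn; exists x; exact: mem_cluster.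
Qed.

(* Since every vertex of [S] has a small [K]-cluster, the ringings inside [S]
   always create their links and the two runs can only differ inside [S],
   until a link between [S] and its complement appears in both of them. *)
Lemma evolve_split r L Q :
  edges_outside S L -> edges_inside S Q -> Q \subset K ->
  {in r, forall p, internal S p -> edge p \in K} ->
  let L' := evolve L (filter (predC (internal S)) r) in
  (exists2 Q', evolve (L :|: Q) r = L' :|: Q' &
     [/\ edges_outside S L', edges_inside S Q' & Q' \subset K])
  \/ (crossing S (evolve (L :|: Q) r) /\ crossing S L').
Proof.
elim: r L Q => [|p r IH] L Q LS QS QK rK /=; first by left; exists Q.
have rK_tail : {in r, forall p, internal S p -> edge p \in K}.
  by move=> p' p'r; apply: rK; rewrite inE p'r orbT.
have smallU x : x \in S -> small (L :|: Q) x.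
  by move=> xS; rewrite (cluster_setU_inside LS QS xS) (small_subset QK (K_small xS)).
have smallL x : x \in S -> small L x.
  by move=> xS; rewrite (cluster_outside_edges LS xS) cards1 (one_lt_threshold xS).
have LS' i j : i \notin S -> j \notin S -> edges_outside S ([set i; j] |: L).
  move=> iS jS; apply/forall_inP => E; rewrite in_setU1 => /orP[/eqP->|EL].
    by apply/subsetP => z; rewrite !inE => /orP[] /eqP->; rewrite ?iS ?jS.
  by move/forall_inP: LS => /(_ E EL).
have crossing_step G r' i j : i \in S -> j \notin S ->
    crossing S (evolve ([set i; j] |: G) r').
  by move=> iS jS; exact: crossingS (subset_evolve _ _) (crossing_edge _ iS jS).
case: (boolP (p.1 \in S)) => p1S; case: (boolP (p.2 \in S)) => p2S.
- rewrite /internal p1S p2S /= [step _ _ p]/step !smallU // setUCA; apply: IH => //.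
  + apply/forall_inP => E; rewrite in_setU1 => /orP[/eqP->|EQ].
      by apply/subsetP => z; rewrite !inE => /orP[] /eqP->.
    by move/forall_inP: QS => /(_ E EQ).
  by rewrite subUset sub1set QK andbT rK ?inE ?eqxx // /internal p1S.
- rewrite /internal p1S (negbTE p2S) /= [step _ (_ :|: _) p]/step [step _ L p]/step.
  rewrite (smallU _ p1S) (smallL _ p1S).
  rewrite (cluster_setU_outside LS QS p2S).
  by case: ifP => _; [right; split; exact: crossing_step | exact: IH].
- rewrite /internal (negbTE p1S) /= [step _ (_ :|: _) p]/step [step _ L p]/step.
  rewrite (smallU _ p2S) (smallL _ p2S).
  rewrite (cluster_setU_outside LS QS p1S) !andbT (setUC [set p.1]).
  by case: ifP => _; [right; split; exact: crossing_step | exact: IH].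
- rewrite /internal (negbTE p1S) /= [step _ (_ :|: _) p]/step [step _ L p]/step.
  rewrite !(cluster_setU_outside LS QS) //.
  by case: ifP => _; [rewrite setUA; apply: IH => //; exact: LS' | exact: IH].
Qed.

End evolution.

Lemma eq_in_sort (T : eqType) (le1 le2 : rel T) (s : seq T) :
  {in s &, le1 =2 le2} -> sort le1 s = sort le2 s.
Proof.
move=> le12; have /all_sigP[s' Es] : all (mem s) s by apply/allP.
rewrite Es !sort_map; congr (map _ (sort _ s')).
by apply/funext => x; apply/funext => y; exact: le12 (svalP x) (svalP y).
Qed.

Section muting_inside_clocks.
Context (R : realType) (N : nat) (a t : R) (S : {set 'I_N}).
Local Notation pair := ('I_N * 'I_N)%type.
Local Notation graph := {set {set 'I_N}}.
Local Notation small G x := (#|cluster G x|%:R < a).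
Implicit Types (e : clocks R N) (G : graph) (p : pair).

Definition mute e : clocks R N := fun p => if internal S p then t + 1 else e p.

Lemma rung_mute e : rung (mute e) t = filter (predC (internal S)) (rung e t).
Proof.
rewrite /rung filter_sort; last 2 first.
- by move=> x y; exact: le_total.
- by move=> x y z; exact: le_trans.
have -> : filter (fun p => mute e p <= t) (pairs N) =
          filter (predC (internal S)) (filter (fun p => e p <= t) (pairs N)).
  rewrite -filter_predI; apply: eq_filter => p /=; rewrite /mute.
  by case: (internal S p) => //=; apply/negbTE; rewrite -ltNge ltrDl ltr01.
apply: eq_in_sort => p q; rewrite !mem_filter /= /mute.
by move=> /andP[/negbTE -> _] /andP[/negbTE -> _].
Qed.

Lemma mem_rung e p : (p \in rung e t) = (p.1 < p.2)%N && fired t e p.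
Proof. by rewrite /rung mem_sort mem_filter mem_pairs andbC. Qed.

Lemma no_crossing G : (forall x, (x \in S) = small G x) -> ~~ crossing S G.
Proof.
move=> SE; apply/negP => /existsP[i /existsP[j /and3P[iS jS ij]]].
have jc : j \in cluster G i by rewrite inE connect1.
by move: jS; rewrite SE (cluster_eq jc) -SE iS.
Qed.

Lemma St_mute_of_St e : St a e t = S ->
  no_big_comp a S (pattern_graph S (fired t e)) /\ St a (mute e) t = S.
Proof.
move=> StE; have SE x : (x \in S) = small (links a e t) x by rewrite -StE inE.
have K_small x : x \in S -> small (links a e t) x by rewrite SE.
have rK : {in rung e t, forall p, internal S p -> edge p \in links a e t}.
  by move=> p pr /andP[p1S p2S]; apply: mem_evolve => //; exact: K_small.
have [[Q' linksE [LS QS _]]|[cross _]] := evolve_split K_small (edges_outside0 S)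
    (edges_inside0 S) (sub0set _) rK; last first.
  by rewrite setU0 in cross; case/negP: (no_crossing SE).
rewrite setU0 -rung_mute in linksE LS; split.
  apply/forall_inP => x xS; apply: small_subset (K_small x xS).
  apply/subsetP => E /pattern_graphP[p [p12 Ip ep ->]]; apply: rK => //.
  by rewrite mem_rung p12.
apply/setP => x; rewrite inE; have [xS|xS] := boolP (x \in S).
  by apply: small_subset (K_small x xS); rewrite /links linksE subsetUl.
by have := xS; rewrite SE /links linksE (cluster_setU_outside LS QS xS) => /negbTE.
Qed.

Lemma St_of_St_mute e : no_big_comp a S (pattern_graph S (fired t e)) ->
  St a (mute e) t = S -> St a e t = S.
Proof.
move=> /forall_inP K_small StE.
have SE x : (x \in S) = small (links a (mute e) t) x by rewrite -StE inE.
have rK : {in rung e t, forall p,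
  internal S p -> edge p \in pattern_graph S (fired t e)}.
  by move=> p; rewrite mem_rung => /andP[p12 ep] Ip; apply/pattern_graphP; exists p.
have [[Q' linksE [LS QS QK]]|[_ cross]] := evolve_split K_small (edges_outside0 S)
    (edges_inside0 S) (sub0set _) rK; last first.
  by rewrite -rung_mute in cross; case/negP: (no_crossing SE).
rewrite setU0 -rung_mute in linksE LS.
apply/setP => x; rewrite inE /links linksE; have [xS|xS] := boolP (x \in S).
  by rewrite (cluster_setU_inside LS QS xS) (small_subset QK (K_small x xS)).
by have := xS; rewrite SE /links (cluster_setU_outside LS QS xS) => /negbTE.
Qed.

Lemma St_eqE e : (St a e t == S) =
  no_big_comp a S (pattern_graph S (fired t e)) && (St a (mute e) t == S).
Proof.
apply/eqP/andP => [/St_mute_of_St[-> ->] //|[nbc /eqP]].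
exact: St_of_St_mute.
Qed.

Lemma St_Ct_eqE e G : (St a e t == S) && (Ct a e t == G) =
  ((pattern_graph S (fired t e) == G) && no_big_comp a S (pattern_graph S (fired t e)))
  && (St a (mute e) t == S).
Proof.
rewrite -andbA -St_eqE andbC.
have [StE|_] := eqVneq (St a e t) S; last by rewrite !andbF.
by rewrite -[Ct a e t]/(pattern_graph _ (fired t e)) StE.
Qed.

End muting_inside_clocks.

Unset Implicit Arguments. Set Strict Implicit. Set Printing Implicit Defensive.

Theorem lemma4p1 (R : realType) (alpha : nat -> R)
  (halpha_inf : alpha n @[n --> \oo] --> +oo)
  (halpha_o : (fun n => alpha n / n%:R) @ \oo --> 0)
  (N : nat) (hN : (2 <= N)%N) (t : R) (ht : 0 <= t)
  (S : {set 'I_N})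
  (hS : (0 < Pr (fun e => St (alpha N) e t == S))%E)
  (G : {set {set 'I_N}}) (hG : graph_on S G) :
  fine (Pr (fun e => (St (alpha N) e t == S) && (Ct (alpha N) e t == G)))
    / fine (Pr (fun e => St (alpha N) e t == S))
  = ER S (pN N t) (fun H => (H == G) && no_big_comp (alpha N) S H)
    / ER S (pN N t) (no_big_comp (alpha N) S).
Proof.
set a := alpha N; set rate : R := N%:R^-1.
have rate_gt0 : 0 < rate by rewrite invr_gt0 ltr0n (leq_trans _ hN).
pose B e := St a (mute t S e) t == S.
pose PrB := iint rate (pairs N) (fun e => (B e)%:R%:E) (fun _ => 0).
have B_upd e p y : internal S p -> B (upd e p y) = B e.
  move=> Ip; rewrite /B; congr (St a _ t == S); apply/funext => r.
  by rewrite /mute /upd; case: eqP => [->|]; rewrite ?Ip.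
have factor (A : {set {set 'I_N}} -> bool) :
    iint rate (pairs N) (fun e => (A (pattern_graph S (fired t e)) && B e)%:R%:E)
         (fun _ => 0) = ((ER S (pN N t) A)%:E * PrB)%E.
  rewrite (ER_bern_expect _ _ _ (fired t (fun _ => 0))).
  rewrite (iint_factor rate_gt0 (t := t) (I := internal S)
    (Phi := fun th => A (pattern_graph S th)) (B := B)) //.
  by move=> th p b Np; rewrite pattern_graph_fupd.
have PrS : Pr (fun e => St a e t == S) = ((ER S (pN N t) (no_big_comp a S))%:E * PrB)%E.
  by rewrite -factor /Pr; congr iint; apply/funext => e; rewrite St_eqE.
have PrSC : Pr (fun e => (St a e t == S) && (Ct a e t == G)) =
            ((ER S (pN N t) (fun H => (H == G) && no_big_comp a S H))%:E * PrB)%E.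
  by rewrite -factor /Pr; congr iint; apply/funext => e; rewrite St_Ct_eqE.
have PrBE : PrB = (fine PrB)%:E.
  by rewrite fineK // iint_fin_num // => e; case: (B e); rewrite !lee_fin ?lexx ?ler01.
rewrite PrS PrSC PrBE -!EFinM /= in hS *.
have PrB_neq0 : fine PrB != 0 by apply: contraTneq hS => ->; rewrite mulr0 ltxx.
by rewrite invfM mulrACA divff // mulr1.
Qed.
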